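(* Let $a$ be a limit point of a topological space $\mathfrak X$, and let $\{\varphi_n(x)\}_{n\ge1}$ be an asymptotic sequence over $\mathfrak X$ at $x=a$ such that each $\varphi_n$ is nonzero in a punctured neighbourhood of $a$. Let $\{\psi_n(x)\}_{n\ge1}$ be any sequence of complex-valued functions such that $\psi_n(x)-\varphi_n(x)=o(\varphi_m(x))$ $(x\to a)_{\mathfrak X}$ for all positive integers $n\le m$. Then $\{\psi_n(x)\}$ is also an asymptotic sequence over $\mathfrak X$ at $x=a$. Moreover, if $N$ is a positive integer or $\infty$, then for any complex-valued $f(x)$ and complex numbers $a_n$, the asymptotic expansion $f(x)\sim\sum_{n=1}^N a_n\varphi_n(x)$ $(x\to a)_{\mathfrak X}$ of order $N$ holds if and only if the asymptotic expansion $f(x)\sim\sum_{n=1}^N a_n\psi_n(x)$ $(x\to a)_{\mathfrak X}$ of order $N$ holds.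
   Context: $f=o(g)$ $(x\to a)_{\mathfrak X}$: for every $M>0$ there is a punctured neighbourhood $U\subseteq\mathfrak X$ of $a$ with $|f|\le M|g|$ on $U$. Asymptotic sequence at $a$: $\varphi_{n+1}=o(\varphi_n)$ for all $n$. Asymptotic expansion $f\sim\sum_{n=1}^N a_n\varphi_n$ of order $N$: $f-\sum_{k=1}^n a_k\varphi_k=o(\varphi_n)$ for all positive integers $n\le N$ (for $N=\infty$: for all $n$). *)

From HB Require Import structures.
From mathcomp Require Import all_boot all_order all_algebra.
From mathcomp Require Import all_classical all_reals topology.
From mathcomp Require Import complex.
Set Implicit Arguments. Unset Strict Implicit. Unset Printing Implicit Defensive.
Import Order.TTheory GRing.Theory Num.Theory.
Local Open Scope ring_scope.
Local Open Scope complex_scope.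

Section Defs.
Variables (R : realType) (T : topologicalType).
Notation C := (R[i]).

Definition near_punct (X : set T) (a : T) (P : T -> Prop) : Prop :=
  exists V : set T, nbhs a V /\ forall x, V x -> X x -> x <> a -> P x.

Definition littleo_at (X : set T) (a : T) (f g : T -> C) : Prop :=
  forall M : R, 0 < M ->
    near_punct X a (fun x => `|f x| <= M%:C * `|g x|).

(* asymptotic sequence {phi_n}_{n>=1} (index 0 is ignored) *)
Definition asymp_seq (X : set T) (a : T) (phi : nat -> T -> C) : Prop :=
  forall n : nat, (0 < n)%N -> littleo_at X a (phi n.+1) (phi n).

(* N : option nat, with None meaning N = infinity *)
Definition within_order (N : option nat) (n : nat) : bool :=
  if N is Some k then (n <= k)%N else true.

Definition asymp_exp (X : set T) (a : T) (f : T -> C) (A : nat -> C)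
  (phi : nat -> T -> C) (N : option nat) : Prop :=
  forall n : nat, (0 < n)%N -> within_order N n ->
    littleo_at X a (fun x => f x - \sum_(1 <= k < n.+1) A k * phi k x) (phi n).
End Defs.

(* Taking m = n in the hypothesis gives |psi_n - phi_n| <= |phi_n| / 2 near a,
   so psi_n and phi_n bound each other up to a factor 2: o(phi_n) and o(psi_n)
   coincide, and psi_(n+1) = O(phi_(n+1)) = o(phi_n) = o(psi_n). The remainders
   of order n of the two expansions differ by sum_(k <= n) a_k (psi_k - phi_k),
   which is o(phi_n) because every psi_k - phi_k with k <= n is. *)

From HB Require Import structures.
From mathcomp Require Import all_boot all_order all_algebra.
From mathcomp Require Import all_classical all_reals topology.
From mathcomp Require Import complex.
From mathcomp Require Import lra.
Import Order.TTheory GRing.Theory Num.Theory.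
Local Open Scope ring_scope.
Local Open Scope complex_scope.
Local Open Scope classical_set_scope.
Set Implicit Arguments. Unset Strict Implicit. Unset Printing Implicit Defensive.

Section LittleO.
Variables (K : realFieldType) (V : normedZmodType K) (T : Type).
Variable F : set_system T.
Context {FF : Filter F}.

Definition littleo_to (f g : T -> V) :=
  forall e : K, 0 < e -> \forall x \near F, `|f x| <= e * `|g x|.

Definition bigO_to (f g : T -> V) :=
  exists2 c : K, 0 < c & \forall x \near F, `|f x| <= c * `|g x|.

Lemma littleo_to0 (h : T -> V) : littleo_to (fun=> 0) h.
Proof. by move=> e e0; apply: filterE => x; rewrite normr0 mulr_ge0 // ltW. Qed.

Lemma littleo_toD (f g h : T -> V) :
  littleo_to f h -> littleo_to g h -> littleo_to (fun x => f x + g x) h.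
Proof.
move=> fh gh e e0; have e2 : 0 < e / 2 by rewrite divr_gt0.
apply: filterS2 (fh _ e2) (gh _ e2) => x fx gx.
by apply: le_trans (ler_normD _ _) _; rewrite [e]splitr mulrDl lerD.
Qed.

Lemma littleo_toN (f h : T -> V) : littleo_to f h -> littleo_to (fun x => - f x) h.
Proof. by move=> fh e e0; apply: filterS (fh e e0) => x; rewrite normrN. Qed.

Lemma littleo_to_sum (I : Type) (r : seq I) (P : pred I) (f : I -> T -> V)
    (h : T -> V) :
  (forall i, P i -> littleo_to (f i) h) ->
  littleo_to (fun x => \sum_(i <- r | P i) f i x) h.
Proof.
move=> fh; elim: r => [|i r IH].
  by under eq_fun do rewrite big_nil; exact: littleo_to0.
under eq_fun do rewrite big_cons.
by case: (P i) (fh i) => [/(_ isT)/littleo_toD|_]; [apply|].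
Qed.

Lemma bigO_littleo_to_trans (f g h : T -> V) :
  bigO_to f g -> littleo_to g h -> littleo_to f h.
Proof.
move=> [c c0 fg] gh e e0; apply: filterS2 fg (gh _ (divr_gt0 e0 c0)) => x fgx ghx.
apply: le_trans fgx _; rewrite -(ler_pM2l c0) in ghx; apply: le_trans ghx _.
by rewrite mulrA mulrCA divff ?lt0r_neq0 // mulr1.
Qed.

Lemma littleo_bigO_to_trans (f g h : T -> V) :
  littleo_to f g -> bigO_to g h -> littleo_to f h.
Proof.
move=> fg [c c0 gh] e e0; apply: filterS2 gh (fg _ (divr_gt0 e0 c0)) => x ghx fgx.
apply: le_trans fgx _; rewrite -(ler_pM2l (divr_gt0 e0 c0)) in ghx.
by apply: le_trans ghx _; rewrite mulrA divfK ?lt0r_neq0.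
Qed.

Lemma littleo_to_bigO_iff (f g h : T -> V) :
  bigO_to g h -> bigO_to h g -> littleo_to f g <-> littleo_to f h.
Proof. by move=> gh hg; split=> /littleo_bigO_to_trans; apply. Qed.

Lemma littleo_to_sub_bigO (f g : T -> V) :
  littleo_to (fun x => g x - f x) f -> bigO_to g f /\ bigO_to f g.
Proof.
move=> /(_ 2^-1); rewrite invr_gt0 ltr0n => /(_ isT) gf.
split; exists 2 => //; apply: filterS gf => x gfx; have := normr_ge0 (f x).
- by have := ler_normD (f x) (g x - f x); rewrite addrC subrK; lra.
- by have := ler_normD (g x) (f x - g x); rewrite addrC subrK distrC; lra.
Qed.

Lemma littleo_to_sub_iff (f g h : T -> V) :
  littleo_to (fun x => f x - g x) h -> littleo_to f h <-> littleo_to g h.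
Proof.
move=> fgh; split=> [fh|gh].
  have := littleo_toD fh (littleo_toN fgh).
  by under eq_fun do rewrite opprB addrC subrK.
have := littleo_toD gh fgh.
by under eq_fun do rewrite addrC subrK.
Qed.

End LittleO.

(* [Rcomplex R] is [R[i]] normed over [R], with the modulus as its real norm. *)
Section ComplexExpansion.
Variables (R : rcfType) (T : Type) (F : set_system T).
Context {FF : Filter F}.
Local Notation littleo_C := (@littleo_to R (Rcomplex R) T F).
Local Notation bigO_C := (@bigO_to R (Rcomplex R) T F).

Lemma bigO_to_mull (k : Rcomplex R) (f : T -> Rcomplex R) :
  bigO_C (fun x => k * f x) f.
Proof.
have normM (z w : Rcomplex R) : `|z * w : Rcomplex R| = `|z| * `|w| :> R.
  exact: Normc.normcM.
exists (`|k| + 1); first exact: ltr_wpDl (normr_ge0 _) ltr01.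
by apply: filterE => x; rewrite normM ler_wpM2r // lerDl.
Qed.

Lemma littleo_to_remainder_iff (phi psi : nat -> T -> Rcomplex R)
    (f : T -> Rcomplex R) (A : nat -> Rcomplex R) (n : nat) :
  (forall k, (0 < k <= n)%N -> littleo_C (fun x => psi k x - phi k x) (phi n)) ->
  bigO_C (phi n) (psi n) -> bigO_C (psi n) (phi n) ->
  littleo_C (fun x => f x - \sum_(1 <= k < n.+1) A k * phi k x) (phi n) <->
  littleo_C (fun x => f x - \sum_(1 <= k < n.+1) A k * psi k x) (psi n).
Proof.
move=> psi_phi phiO psiO.
rewrite -(littleo_to_bigO_iff _ phiO psiO); apply: littleo_to_sub_iff.
have sum_psi_phi x : (f x - \sum_(1 <= k < n.+1) A k * phi k x) -
    (f x - \sum_(1 <= k < n.+1) A k * psi k x) =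
    \sum_(1 <= k < n.+1) A k * (psi k x - phi k x).
  rewrite opprB addrC addrA subrK -sumrB.
  by apply: eq_bigr => k _; rewrite mulrBr.
under eq_fun do rewrite sum_psi_phi big_nat_cond.
apply: littleo_to_sum => k /andP[kn _].
exact/(bigO_littleo_to_trans (bigO_to_mull (A k) _))/psi_phi.
Qed.

End ComplexExpansion.

Local Notation punctured X a := (within (X `\ a) (nbhs a)).

Section PuncturedNbhs.
Variables (R : realType) (T : topologicalType) (X : set T) (a : T).

Lemma near_punctE (P : T -> Prop) :
  near_punct X a P <-> \forall x \near punctured X a, P x.
Proof.
rewrite near_withinE; split=> [[V [aV VP]]|aP].
  by apply: filterS aV => x Vx [Xx xa]; exact: VP.
by exists [set x | (X `\ a) x -> P x]; split=> // x + Xx xa; apply.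
Qed.

Lemma littleo_atE (f g : T -> R[i]) :
  littleo_at X a f g <-> littleo_to (punctured X a) (f : T -> Rcomplex R) g.
Proof.
have normE (z : R[i]) : `|z| = (`|z : Rcomplex R|)%:C by [].
split=> fg e e0.
  have /near_punctE := fg e e0.
  by apply: filterS => x; rewrite !normE -rmorphM lecR.
by apply/near_punctE; apply: filterS (fg e e0) => x; rewrite !normE -rmorphM lecR.
Qed.

End PuncturedNbhs.

Theorem proposition2p2 (R : realType) (T : topologicalType) (X : set T) (a : T)
  (phi psi : nat -> T -> R[i]) :
  limit_point X a ->
  asymp_seq X a phi ->
  (forall n : nat, (0 < n)%N -> near_punct X a (fun x => phi n x != 0)) ->
  (forall n m : nat, (0 < n)%N -> (n <= m)%N ->
     littleo_at X a (fun x => psi n x - phi n x) (phi m)) ->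
  asymp_seq X a psi /\
  (forall (N : option nat), (if N is Some k then (0 < k)%N else true) ->
   forall (f : T -> R[i]) (A : nat -> R[i]),
     asymp_exp X a f A phi N <-> asymp_exp X a f A psi N).
Proof.
(* The limit-point and non-vanishing hypotheses only make the o-relations
   non-vacuous; the transfer argument does not use them. *)
move=> _ phi_asymp _ psi_phi.
have psi_phi_o n k : (0 < k <= n)%N ->
    littleo_to (punctured X a) (fun x => psi k x - phi k x : Rcomplex R) (phi n).
  by case/andP=> k0 kn; apply/littleo_atE/psi_phi.
have psi_phi_O n : (0 < n)%N ->
    bigO_to (punctured X a) (psi n : T -> Rcomplex R) (phi n) /\
    bigO_to (punctured X a) (phi n : T -> Rcomplex R) (psi n).
  by move=> n0; apply/littleo_to_sub_bigO/psi_phi_o; rewrite n0 leqnn.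
split=> [n n0|N _ f A].
  have [psiO _] := psi_phi_O n.+1 isT; have [_ phiO] := psi_phi_O n n0.
  apply/littleo_atE/(bigO_littleo_to_trans psiO)/(littleo_bigO_to_trans _ phiO).
  exact/littleo_atE/phi_asymp.
split=> fA n n0 nN; have [psiO phiO] := psi_phi_O n n0.
all: apply/littleo_atE/(littleo_to_remainder_iff f A (psi_phi_o n) phiO psiO).
all: exact/littleo_atE/fA.
Qed.
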